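(* Let $n \ge 2$ and $L$ be integers with $2 \le L \le n+1$. On the grid $\{1,\dots,n\}^2$ consider the following subsets: the lines $L_i = \{(i,k) : 1 \le k \le n\}$ for $1 \le i \le n$; the columns $C_j = \{(k,j) : 1 \le k \le n\}$ for $1 \le j \le n$; and, for each slope $a \in \{1,\dots,L-2\}$ and each $b \in \{1,\dots,n\}$, the diagonal $D^a_b = \{(k, r_n(ak+b)) : 1 \le k \le n\}$, where $r_n(m)$ denotes the unique element of $\{1,\dots,n\}$ congruent to $m$ modulo $n$. Then the family $\{L_k, C_k, D^a_k : 1 \le k \le n,\ 1 \le a \le L-2\}$ is an $N(n^2,n,L)$ multipool if and only if $L-2$ is smaller than the smallest prime divisor of $n$.
   Context: A family of subsets (pools) of a set of $n^2$ items is called an $N(n^2,n,L)$ multipool if: (1) each pool contains exactly $n$ items; (2) each item belongs to exactly $L$ pools; (3) any two distinct items belong to at most one common pool. *)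

From mathcomp Require Import all_boot.
Set Implicit Arguments. Unset Strict Implicit. Unset Printing Implicit Defensive.

Definition is_multipool (T I : finType) (F : I -> {set T}) (n L : nat) : Prop :=
  [/\ forall i : I, #|F i| = n,
      forall x : T, #|[set i : I | x \in F i]| = L
    & forall x y : T, x != y -> #|[set i : I | (x \in F i) && (y \in F i)]| <= 1].

Definition rn (n m : nat) : nat := if m %% n == 0 then n else m %% n.

(* The grid {1..n}^2 is represented by 'I_n * 'I_n, the element (i, j)
   standing for the point (i+1, j+1). *)
Definition grid (n : nat) := ('I_n * 'I_n)%type.

Definition gline (n : nat) (i : 'I_n) : {set grid n} := [set p : grid n | p.1 == i].
Definition gcol (n : nat) (j : 'I_n) : {set grid n} := [set p : grid n | p.2 == j].
Definition gdiag (n a b : nat) : {set grid n} :=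
  [set p : grid n | (p.2 : nat).+1 == rn n (a * (p.1 : nat).+1 + b)].

(* Index type of the family: lines, columns, and diagonals D^(a+1)_(b+1)
   for a : 'I_(L-2), b : 'I_n. *)
Definition pool_index (n L : nat) := ('I_n + 'I_n + 'I_(L - 2) * 'I_n)%type.

Definition grid_family (n L : nat) (k : pool_index n L) : {set grid n} :=
  match k with
  | inl (inl i) => gline i
  | inl (inr j) => gcol j
  | inr (a, b) => gdiag n (a : nat).+1 (b : nat).+1
  end.

From mathcomp Require Import all_boot zify.
Set Implicit Arguments. Unset Strict Implicit. Unset Printing Implicit Defensive.

(* Write a point as (X, Y) = (p.1 + 1, p.2 + 1), with coordinates in Z/nZ.  The
   diagonal D^a_b is the graph Y = aX + b and the column C_j is the slope-0 graph
   Y = j, so every pool other than a line L_i is the graph of a function of X: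
   this gives the pool sizes, and for each slope exactly one pool through each
   point.  Two graphs of slopes s < s' through the same two points force
   (s' - s) X = (s' - s) X' mod n, so they meet at most once when s' - s is
   invertible mod n, which holds for all 0 <= s < s' <= L - 2 exactly when
   L - 2 < pdiv n.  Conversely, for a prime r = pdiv n <= L - 2, the points (1, 1)
   and (1 + n/r, 1) lie both on C_1 and on a diagonal of slope r. *)

Lemma eqn_modS_small n u v : u < n -> v < n -> (u.+1 == v.+1 %[mod n]) = (u == v).
Proof. by move=> hu hv; rewrite -addn1 -(addn1 v) eqn_modDr !modn_small. Qed.

Lemma eqn_modMl_coprime n c u v :
  coprime n c -> (c * u == c * v %[mod n]) = (u == v %[mod n]).
Proof.
wlog le_uv : u v / u <= v.
  move=> W hc; case: (leqP u v) => [|/ltnW] le; first exact: W.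
  by rewrite eq_sym [RHS]eq_sym; apply: W.
move=> hc; rewrite eq_sym [RHS]eq_sym !eqn_mod_dvd ?leq_mul2l ?le_uv ?orbT //.
by rewrite -mulnBr Gauss_dvdr.
Qed.

Lemma coprime_lt_pdiv n c : 0 < c -> c < pdiv n -> coprime n c.
Proof.
move=> c_gt0 lt_c_pdiv; rewrite /coprime; apply: contraLR lt_c_pdiv => g_neq1.
have g_gt1 : 1 < gcdn n c by have := gcdn_gt0 n c; rewrite c_gt0 orbT; lia.
rewrite -leqNgt; apply: leq_trans (pdiv_min_dvd g_gt1 (dvdn_gcdl n c)) _.
exact: dvdn_leq c_gt0 (dvdn_gcdr n c).
Qed.

Lemma ord_succ_mod_unique n c m : 0 < n ->
  exists u : 'I_n, forall v : 'I_n, (c + v.+1 == m %[mod n]) = (v == u).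
Proof.
move=> n_gt0; pose f (v : 'I_n) := Ordinal (ltn_pmod (c + v.+1) n_gt0).
have f_inj : injective f.
  move=> v w /(congr1 val) /= /eqP; rewrite eqn_modDl eqn_modS_small //.
  by move/eqP/val_inj.
have /codomP[u fu] := injF_onto f_inj (Ordinal (ltn_pmod m n_gt0)).
by exists u => v; rewrite -(inj_eq f_inj) -fu -val_eqE.
Qed.

Lemma card_set_graph (I J : finType) (R : I -> J -> bool) :
  (forall i, exists j0, forall j, R i j = (j == j0)) ->
  #|[set p : I * J | R p.1 p.2]| = #|I|.
Proof.
move=> R_graph.
have graph_b i : exists j0, [forall j, R i j == (j == j0)].
  by have [j0 R_j0] := R_graph i; exists j0; apply/forallP => j; rewrite R_j0.
pose f i := xchoose (graph_b i).
have Rf i j : R i j = (j == f i) by apply/eqP/(forallP (xchooseP (graph_b i))).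
have -> : [set p : I * J | R p.1 p.2] = [set (i, f i) | i : I].
  apply/setP => -[i j]; rewrite inE /= Rf.
  apply/eqP/imsetP => [->|[i' _ [-> ->]]] //; by exists i.
by rewrite card_imset ?cardT ?size_enum //; move=> i i' /(congr1 fst).
Qed.

Lemma cards_sumType (I J : finType) (P : pred (I + J)) :
  #|[set k | P k]| = #|[set i | P (inl i)]| + #|[set j | P (inr j)]|.
Proof.
by rewrite -!sum1_card big_sumType; congr (_ + _); apply: eq_bigl => ?; rewrite !inE.
Qed.

Lemma rn_mod n m : 0 < n -> rn n m = m %[mod n].
Proof. by move=> n_gt0; rewrite /rn; case: ifP => [/eqP ->|_]; rewrite ?modnn ?modn_mod. Qed.

Lemma rn_gt0 n m : 0 < n -> 0 < rn n m.
Proof. by move=> n_gt0; rewrite /rn; case: ifP => // /negbT; rewrite lt0n. Qed.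

Lemma rn_le n m : 0 < n -> rn n m <= n.
Proof. by move=> n_gt0; rewrite /rn; case: ifP => // _; rewrite ltnW ?ltn_pmod. Qed.

Lemma mem_gdiag n a b (p : grid n) :
  (p \in gdiag n a b) = ((p.2 : nat).+1 == a * (p.1 : nat).+1 + b %[mod n]).
Proof.
have n_gt0 : 0 < n by case: p => -[] /=; lia.
rewrite inE; set m := a * _ + b; rewrite -(rn_mod m n_gt0); set r := rn n m.
have r_pred : r = r.-1.+1 by rewrite prednK ?rn_gt0.
rewrite [in LHS]r_pred eqSS [in RHS]r_pred eqn_modS_small //.
by have := rn_le m n_gt0; lia.
Qed.

Lemma gcol_gdiag0 n (j : 'I_n) : gcol j = gdiag n 0 j.+1.
Proof. by apply/setP => p; rewrite mem_gdiag inE eqn_modS_small // -val_eqE. Qed.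

Lemma gdiag_intercept_unique n a (p : grid n) :
  exists b0 : 'I_n, forall b : 'I_n, (p \in gdiag n a b.+1) = (b == b0).
Proof.
have n_gt0 : 0 < n by case: p => -[] /=; lia.
have [b0 hb0] := ord_succ_mod_unique (a * (p.1 : nat).+1) (p.2 : nat).+1 n_gt0.
by exists b0 => b; rewrite mem_gdiag eq_sym hb0.
Qed.

Lemma card_gline n (i : 'I_n) : #|gline i| = n.
Proof.
have -> : gline i = setX [set i] setT by apply/setP => -[x y]; rewrite !inE andbT.
by rewrite cardsX cards1 cardsT card_ord mul1n.
Qed.

Lemma card_gdiag n a b : #|gdiag n a b| = n.
Proof.
pose R (x y : 'I_n) := (y : nat).+1 == a * x.+1 + b %[mod n].
have -> : gdiag n a b = [set p | R p.1 p.2] by apply/setP => p; rewrite mem_gdiag inE.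
rewrite -[RHS]card_ord; apply: card_set_graph => x.
have n_gt0 : 0 < n by case: x; lia.
have [y0 hy0] := ord_succ_mod_unique 0 (a * x.+1 + b) n_gt0.
by exists y0 => y; rewrite -hy0.
Qed.

Lemma card_pools_through n L (x : grid n) :
  2 <= L -> #|[set k | x \in @grid_family n L k]| = L.
Proof.
move=> L_ge2; rewrite !cards_sumType /=.
have card_fiber (i0 : 'I_n) (P : pred 'I_n) : P =1 pred1 i0 -> #|[set i | P i]| = 1.
  by move=> P1; rewrite -(card1 i0); apply: eq_card => i; rewrite inE P1.
rewrite (card_fiber x.1) => [|i]; last by rewrite inE eq_sym.
rewrite (card_fiber x.2) => [|j]; last by rewrite inE eq_sym.
pose R (a : 'I_(L - 2)) (b : 'I_n) := x \in gdiag n a.+1 b.+1.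
rewrite (@eq_card _ _ [set ab | R ab.1 ab.2]); last by move=> [a b]; rewrite /R !inE.
rewrite (@card_set_graph _ _ R) ?card_ord; first by lia.
by move=> a; apply: gdiag_intercept_unique.
Qed.

Lemma gdiag_slope n a b (p q : grid n) : p \in gdiag n a b -> q \in gdiag n a b ->
  (p.2 : nat).+1 + a * (q.1 : nat).+1 = (q.2 : nat).+1 + a * (p.1 : nat).+1 %[mod n].
Proof.
rewrite !mem_gdiag => /eqP hp /eqP hq.
rewrite -modnDml hp modnDml -[RHS]modnDml hq modnDml.
by congr (_ %% n); lia.
Qed.

Lemma gdiag_eq_fst n a b (p q : grid n) :
  p \in gdiag n a b -> q \in gdiag n a b -> p.1 = q.1 -> p = q.
Proof.
move=> hp hq e1; have /eqP := gdiag_slope hp hq.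
rewrite e1 eqn_modDr eqn_modS_small // => /eqP/val_inj.
by case: p q e1 {hp hq} => ? ? [? ?] /= -> ->.
Qed.

Lemma gdiag_eq_slopes n a a' b b' (p q : grid n) : a < a' -> coprime n (a' - a) ->
  p \in gdiag n a b -> q \in gdiag n a b ->
  p \in gdiag n a' b' -> q \in gdiag n a' b' -> p = q.
Proof.
move=> lt_aa' cop hp hq hp' hq'; apply: (gdiag_eq_fst hp hq).
have := gdiag_slope hp' hq'; rewrite -(subnKC (ltnW lt_aa')) !mulnDl !addnA.
rewrite -modnDml (gdiag_slope hp hq) modnDml => /eqP.
by rewrite eqn_modDl eqn_modMl_coprime // eqn_modS_small // eq_sym => /eqP/val_inj.
Qed.

Lemma gdiag_shift n a b (p q : grid n) : p.2 = q.2 ->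
  a * (p.1 : nat).+1 = a * (q.1 : nat).+1 %[mod n] ->
  p \in gdiag n a b -> q \in gdiag n a b.
Proof. by rewrite !mem_gdiag => <- e /eqP ->; rewrite -modnDml e modnDml. Qed.

Lemma grid_family_pair_inj n L (k k' : pool_index n L) (p q : grid n) :
  L - 2 < pdiv n -> p != q ->
  p \in grid_family k -> q \in grid_family k ->
  p \in grid_family k' -> q \in grid_family k' -> k = k'.
Proof.
move=> slopes_lt /eqP pq.
have line_diag i s b : p \in gline i -> q \in gline i ->
    p \in gdiag n s b -> q \in gdiag n s b -> False.
  rewrite 2![_ \in gline _]inE => /eqP hp /eqP hq dp dq.
  by apply: pq; apply: (gdiag_eq_fst dp dq); rewrite hp hq.
have diag_diag s s' b b' : s < s' -> s' <= L - 2 ->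
    p \in gdiag n s b -> q \in gdiag n s b ->
    p \in gdiag n s' b' -> q \in gdiag n s' b' -> False.
  move=> lt_ss' le_s' dp dq dp' dq'; apply: pq.
  by apply: (gdiag_eq_slopes lt_ss' _ dp dq dp' dq'); apply: coprime_lt_pdiv; lia.
have same_slope s (b b' : 'I_n) : p \in gdiag n s b.+1 -> p \in gdiag n s b'.+1 -> b = b'.
  by have [b0 hb0] := gdiag_intercept_unique s p; rewrite !hb0 => /eqP -> /eqP ->.
case: k => [[i|j]|[a b]]; case: k' => [[i'|j']|[a' b']] /=; rewrite ?gcol_gdiag0.
- by rewrite !inE => /eqP <- _ /eqP ->.
- by move=> *; exfalso; apply: line_diag; eassumption.
- by move=> *; exfalso; apply: line_diag; eassumption.
- by move=> *; exfalso; apply: line_diag; eassumption.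
- by move=> hp _ hp' _; rewrite (same_slope _ _ _ hp hp').
- by move=> hp hq hp' hq'; case: (diag_diag _ _ _ _ (ltn0Sn a') (ltn_ord a') hp hq hp' hq').
- by move=> *; exfalso; apply: line_diag; eassumption.
- by move=> hp hq hp' hq'; case: (diag_diag _ _ _ _ (ltn0Sn a) (ltn_ord a) hp' hq' hp hq).
- move=> hp hq hp' hq'; case: (ltngtP a a') => [lt_aa'|lt_a'a|/val_inj eq_aa'].
  + by case: (diag_diag a.+1 a'.+1 _ _ lt_aa' (ltn_ord a') hp hq hp' hq').
  + by case: (diag_diag a'.+1 a.+1 _ _ lt_a'a (ltn_ord a) hp' hq' hp hq).
  + by subst a'; rewrite (same_slope _ _ _ hp hp').
Qed.

Lemma grid_family_shared_pair n L r : 0 < n -> 1 < r -> r %| n -> r <= L - 2 ->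
  exists p q : grid n, p != q /\
    1 < #|[set k | (p \in @grid_family n L k) && (q \in grid_family k)]|.
Proof.
move=> n_gt0 r_gt1 r_dvd r_le.
have d_lt : n %/ r < n := ltn_Pdiv r_gt1 n_gt0.
have d_gt0 : 0 < n %/ r by rewrite divn_gt0 ?(ltnW r_gt1) ?(dvdn_leq n_gt0 r_dvd).
have slope_lt : r.-1 < L - 2 by rewrite prednK // ltnW.
pose o := Ordinal n_gt0; pose p : grid n := (o, o); pose q : grid n := (Ordinal d_lt, o).
have [b hb] := gdiag_intercept_unique r p.
have p_diag : p \in gdiag n r b.+1 by rewrite hb.
have q_diag : q \in gdiag n r b.+1.
  apply: gdiag_shift p_diag => //=.
  have rd : r * (n %/ r) = n by rewrite mulnC divnK.
  by rewrite [in RHS]mulnS rd -[RHS]modnDmr modnn addn0 muln1.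
exists p, q; split; first by rewrite xpair_eqE negb_and -val_eqE /= eq_sym -lt0n d_gt0.
pose k : pool_index n L := inl (inr o); pose k' : pool_index n L := inr (Ordinal slope_lt, b).
have sub : [set k; k'] \subset [set k | (p \in grid_family k) && (q \in grid_family k)].
  apply/subsetP => j; rewrite !inE => /orP[]/eqP-> /=; first by rewrite !inE.
  by rewrite prednK ?p_diag ?q_diag // ltnW.
by apply: leq_trans (subset_leq_card sub); rewrite cards2.
Qed.

Theorem lemma1 (n L : nat) (hn : 2 <= n) (hL1 : 2 <= L) (hL2 : L <= n.+1) :
  is_multipool (@grid_family n L) n L <-> L - 2 < pdiv n.
Proof.
split.
- case=> _ _ share_le1; rewrite ltnNge; apply/negP => pdiv_le.
  have [p [q [pq]]] := grid_family_shared_pair (ltnW hn) (prime_gt1 (pdiv_prime hn))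
    (pdiv_dvd n) pdiv_le.
  by rewrite ltnNge share_le1.
- move=> slopes_lt; split.
  + by case=> [[i|j]|[a b]]; rewrite /= ?card_gline ?gcol_gdiag0 ?card_gdiag.
  + by move=> x; apply: card_pools_through.
  + move=> p q pq; apply/card_le1_eqP => k k'; rewrite !inE => /andP[hp hq] /andP[hp' hq'].
    exact: grid_family_pair_inj slopes_lt pq hp' hq' hp hq.
Qed.
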